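(* Let $(X,p)$ be a complete partial metric space, let $x_o\in X$, and let $f:X\to X$ be a Cauchy function at $x_o$. If $f$ is non-expansive and weakly orbitally continuous at $x_o$, then $f$ has a fixed point.
   Context: A partial metric on $X$ is $p:X\times X\to\mathbb{R}$ with, for all $x,y,z$: $p(x,x)\le p(x,y)$; $p(x,y)=p(y,x)$; $p(x,x)=p(x,y)=p(y,y)$ iff $x=y$; $p(x,y)\le p(x,z)+p(z,y)-p(z,z)$. The topology on $X$ is generated by the balls $\{y\mid p(x,y)-p(x,x)<\epsilon\}$, so $a$ is a limit of $\{x_i\}$ iff for every $\epsilon>0$ there is $N$ with $p(a,x_i)-p(a,a)<\epsilon$ for all $i>N$. A sequence $\{x_i\}$ is Cauchy with central distance $r\in\mathbb{R}$ if for every $\epsilon>0$ there is $N$ with $|p(x_i,x_j)-r|<\epsilon$ for all $i\ge j>N$. A special limit of such a sequence is a limit $a$ with $p(a,a)=r$. $(X,p)$ is complete if every Cauchy sequence has a special limit. $f$ is a Cauchy function at $x_o$ if the orbit $\{f^i(x_o)\}_{i\in\mathbb{N}}$ ($f^0(x_o)=x_o$, $f^{i+1}(x_o)=f(f^i(x_o))$) is Cauchy. $f$ is non-expansive if $p(f(x),f(y))\le p(x,y)$ for all $x,y$. $f$ is weakly orbitally continuous at $x_o$ if whenever $a$ is a special limit of $\{f^i(x_o)\}$, $f(a)$ is a limit of $\{f^i(x_o)\}$. *)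

From Stdlib Require Import Reals.
Open Scope R_scope.

Definition is_partial_metric {X : Type} (p : X -> X -> R) : Prop :=
  (forall x y, p x x <= p x y) /\
  (forall x y, p x y = p y x) /\
  (forall x y, (p x x = p x y /\ p x y = p y y) <-> x = y) /\
  (forall x y z, p x y <= p x z + p z y - p z z).

Definition pm_limit {X : Type} (p : X -> X -> R) (u : nat -> X) (a : X) : Prop :=
  forall eps, eps > 0 -> exists N : nat, forall i, (i > N)%nat -> p a (u i) - p a a < eps.

Definition pm_cauchy_with {X : Type} (p : X -> X -> R) (u : nat -> X) (r : R) : Prop :=
  forall eps, eps > 0 -> exists N : nat, forall i j, (i >= j)%nat -> (j > N)%nat ->
    Rabs (p (u i) (u j) - r) < eps.

Definition pm_cauchy {X : Type} (p : X -> X -> R) (u : nat -> X) : Prop :=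
  exists r, pm_cauchy_with p u r.

Definition pm_special_limit {X : Type} (p : X -> X -> R) (u : nat -> X) (a : X) : Prop :=
  exists r, pm_cauchy_with p u r /\ pm_limit p u a /\ p a a = r.

Definition pm_complete {X : Type} (p : X -> X -> R) : Prop :=
  forall u : nat -> X, pm_cauchy p u -> exists a, pm_special_limit p u a.

Fixpoint orbit {X : Type} (f : X -> X) (x0 : X) (i : nat) : X :=
  match i with
  | O => x0
  | S k => f (orbit f x0 k)
  end.

Definition cauchy_function_at {X : Type} (p : X -> X -> R) (f : X -> X) (x0 : X) : Prop :=
  pm_cauchy p (orbit f x0).

Definition non_expansive {X : Type} (p : X -> X -> R) (f : X -> X) : Prop :=
  forall x y, p (f x) (f y) <= p x y.

Definition weakly_orbitally_continuous_at {X : Type} (p : X -> X -> R) (f : X -> X) (x0 : X) : Prop :=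
  forall a, pm_special_limit p (orbit f x0) a -> pm_limit p (orbit f x0) (f a).

From Stdlib Require Import Reals Lra Lia.
Open Scope R_scope.

(* Let a be a special limit of the orbit, with central distance r.  Non-expansiveness
   gives p (f a) (f a) <= p a a = r, while any limit b of a Cauchy sequence with
   central distance r has r <= p b b.  So f a is a second special limit of the
   orbit, and special limits are unique: along the sequence, the triangle
   inequality forces p a (f a) <= r = p a a = p (f a) (f a), whence f a = a. *)

Section PartialMetric.

Variables (X : Type) (p : X -> X -> R).
Hypothesis hp : is_partial_metric p.

Lemma pm_self_le (x y : X) : p x x <= p x y.
Proof. exact (proj1 hp x y). Qed.

Lemma pm_sym (x y : X) : p x y = p y x.
Proof. exact (proj1 (proj2 hp) x y). Qed.

Lemma pm_eq (x y : X) : p x x = p x y -> p x y = p y y -> x = y.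
Proof. intros hxy hyx. exact (proj1 (proj1 (proj2 (proj2 hp)) x y) (conj hxy hyx)). Qed.

Lemma pm_triangle (x y z : X) : p x y <= p x z + p z y - p z z.
Proof. exact (proj2 (proj2 (proj2 hp)) x y z). Qed.

Variables (u : nat -> X) (r : R).
Hypothesis hu : pm_cauchy_with p u r.

Lemma center_le_limit_self (b : X) : pm_limit p u b -> r <= p b b.
Proof.
  intros hb. apply le_epsilon; intros eps heps.
  destruct (hu (eps / 2) ltac:(lra)) as [N1 hN1].
  destruct (hb (eps / 2) ltac:(lra)) as [N2 hN2].
  set (n := S (N1 + N2)).
  assert (hcenter := hN1 n n (le_n n) ltac:(lia)).
  assert (hlim := hN2 n ltac:(lia)).
  apply Rabs_def2 in hcenter.
  assert (hself := pm_self_le (u n) b). rewrite (pm_sym (u n) b) in hself.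
  lra.
Qed.

Lemma limits_dist_le (a b : X) :
  pm_limit p u a -> pm_limit p u b -> p a b <= p a a + p b b - r.
Proof.
  intros ha hb. apply le_epsilon; intros eps heps.
  destruct (hu (eps / 3) ltac:(lra)) as [N1 hN1].
  destruct (ha (eps / 3) ltac:(lra)) as [N2 hN2].
  destruct (hb (eps / 3) ltac:(lra)) as [N3 hN3].
  set (n := S (N1 + N2 + N3)).
  assert (hcenter := hN1 n n (le_n n) ltac:(lia)).
  assert (hla := hN2 n ltac:(lia)).
  assert (hlb := hN3 n ltac:(lia)).
  apply Rabs_def2 in hcenter.
  assert (htri := pm_triangle a b (u n)). rewrite (pm_sym (u n) b) in htri.
  lra.
Qed.

Lemma limits_with_center_self_eq (a b : X) :
  pm_limit p u a -> pm_limit p u b -> p a a = r -> p b b = r -> a = b.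
Proof.
  intros ha hb haa hbb.
  assert (hab := limits_dist_le a b ha hb).
  assert (ha_le := pm_self_le a b).
  assert (hb_le := pm_self_le b a). rewrite (pm_sym b a) in hb_le.
  apply pm_eq; lra.
Qed.

End PartialMetric.

Theorem theorem7p7 (X : Type) (p : X -> X -> R) (x0 : X) (f : X -> X) :
  is_partial_metric p ->
  pm_complete p ->
  cauchy_function_at p f x0 ->
  non_expansive p f ->
  weakly_orbitally_continuous_at p f x0 ->
  exists x, f x = x.
Proof.
  intros hp hcomplete hcauchy hnexp hwoc.
  destruct (hcomplete _ hcauchy) as [a ha].
  assert (hfa := hwoc a ha).
  destruct ha as [r [hr [ha haa]]].
  assert (hfa_le : p (f a) (f a) <= r) by (rewrite <- haa; apply hnexp).
  assert (hfa_ge := center_le_limit_self X p hp _ r hr (f a) hfa).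
  exists a. symmetry.
  apply (limits_with_center_self_eq X p hp _ r hr a (f a) ha hfa haa); lra.
Qed.
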